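(* Let $U$ be a unicyclic graph of order $n\ge 5$, and let $X$ be an eigenvector of the adjacency matrix $A(U^c)$ corresponding to its least eigenvalue $\lambda_{\min}(U^c)$. Then $X$ has at least two positive entries and at least two negative entries.
   Context: A unicyclic graph is a connected graph containing exactly one cycle. $U^c$ denotes the complement of $U$, and $\lambda_{\min}(G)$ denotes the least eigenvalue of the adjacency matrix of a graph $G$. *)

From HB Require Import structures.
From mathcomp Require Import all_boot all_order all_algebra.
Set Implicit Arguments. Unset Strict Implicit. Unset Printing Implicit Defensive.
Import Order.TTheory GRing.Theory Num.Theory.
Local Open Scope ring_scope.

Definition simple_graph (T : finType) (e : rel T) : Prop :=
  irreflexive e /\ symmetric e.

Definition compl_graph (T : finType) (e : rel T) : rel T :=
  [rel x y | (x != y) && ~~ e x y].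

Definition adj_mx (R : pzRingType) (n : nat) (e : rel 'I_n) : 'M[R]_n :=
  \matrix_(i, j) (e i j)%:R.

Definition connected_graph (T : finType) (e : rel T) : Prop :=
  forall x y : T, connect e x y.

Definition is_graph_cycle (T : finType) (e : rel T) (s : seq T) : bool :=
  [&& uniq s, (2 < size s)%N & cycle e s].

Definition cycle_edges (T : finType) (s : seq T) : {set {set T}} :=
  [set [set x; next s x] | x in s].

(* Unicyclic: connected, with exactly one cycle (cycles identified as
   subgraphs, i.e. by their edge sets). *)
Definition unicyclic (T : finType) (e : rel T) : Prop :=
  connected_graph e /\
  exists C : {set {set T}},
    (exists s, is_graph_cycle e s /\ cycle_edges s = C) /\
    (forall s, is_graph_cycle e s -> cycle_edges s = C).

Definition least_eigenvalue (R : realFieldType) (n : nat) (A : 'M[R]_n) (lam : R)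
  : Prop :=
  eigenvalue A lam /\ (forall mu, eigenvalue A mu -> lam <= mu).

From HB Require Import structures.
From mathcomp Require Import all_boot all_order all_algebra.
From mathcomp Require Import complex.
From mathcomp Require Import ring lra.
Import Order.TTheory GRing.Theory Num.Theory Num.Def.
Set Implicit Arguments. Unset Strict Implicit. Unset Printing Implicit Defensive.
Local Open Scope ring_scope.

(* Proof outline.
   1. Graph theory: a unicyclic graph on >= 5 vertices has an edge ik and a
      vertex j adjacent to neither i nor k (otherwise every edge dominates,
      and a fresh vertex next to the triangle or square of U would close a
      second cycle).  Hence i - j - k is an induced path of U^c.
   2. Linear algebra: the Rayleigh bound lam y^T y <= y^T A y (via the
      spectral theorem over R[i]) applied to y = e_i - 2 e_j + e_k gives
      lam_min(U^c) <= -4/3 < -1.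
   3. Sign pattern: if an eigenvector Y for lam < -1 had a single positive
      entry, at v, the eigen-equations force its negative entries onto two
      adjacent vertices forming with a neighbour of v the cycle of U, and
      the equation at any fifth vertex then forces lam = -1.  No positive
      entry at all is excluded since A(U^c) is nonnegative and lam < 0.
   Applying 3 to X and -X gives the theorem. *)

Section UnicyclicGraphs.
Variables (T : finType) (e : rel T).

(* Cycles are identified by their edge sets, so in a unicyclic graph every
   cycle passes through the vertices of every other cycle. *)
Lemma unicyclic_cycle_sub (s1 s2 : seq T) :
  unicyclic e -> is_graph_cycle e s1 -> is_graph_cycle e s2 -> {subset s2 <= s1}.
Proof.
case=> _ [C [_ cycleC]] cyc1 cyc2 x xs2.
have same_edges : cycle_edges s2 = cycle_edges s1.
  by rewrite (cycleC _ cyc1) (cycleC _ cyc2).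
have : [set x; next s2 x] \in cycle_edges s1.
  by rewrite -same_edges; apply/imsetP; exists x.
case/imsetP => y ys1 xy_edge.
have : x \in [set y; next s1 y] by rewrite -xy_edge set21.
by rewrite !inE => /orP[/eqP->|/eqP->] //; rewrite mem_next.
Qed.

Lemma fresh_vertex (s : seq T) : (size s < #|T|)%N -> exists z, z \notin s.
Proof.
move=> small; apply/existsP; rewrite -negb_forall; apply/negP => /forallP all_in.
have : (#|T| <= size s)%N.
  apply: leq_trans (card_size s); apply: subset_leq_card.
  by apply/subsetP => z _; apply: all_in.
by rewrite leqNgt small.
Qed.

Lemma connected_has_neighbour x :
  connected_graph e -> (1 < #|T|)%N -> exists u, e x u.
Proof.
move=> conn big; have [w w_new] := fresh_vertex (s := [:: x]) big.
case/connectP: (conn x w) => [[|z p]] /=; last by case/andP=> exz _ _; exists z.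
by move=> _ wx; move: w_new; rewrite wx inE eqxx.
Qed.

Hypotheses (e_irr : irreflexive e) (e_sym : symmetric e) (e_uni : unicyclic e).

Lemma adjacent_neq a b : e a b -> a != b.
Proof. by apply: contraTneq => ->; rewrite e_irr. Qed.

Lemma triangle_cycle a b c : e a b -> e b c -> e a c -> is_graph_cycle e [:: a; b; c].
Proof.
move=> eab ebc eac.
have ab := adjacent_neq eab; have bc := adjacent_neq ebc; have ac := adjacent_neq eac.
by rewrite /is_graph_cycle /= !inE !negb_or ab ac bc /= eab ebc (e_sym c a) eac.
Qed.

Lemma square_cycle a b c d : a != c -> b != d ->
  e a b -> e b c -> e c d -> e d a -> is_graph_cycle e [:: a; b; c; d].
Proof.
move=> ac bd eab ebc ecd eda.
have ab := adjacent_neq eab; have bc := adjacent_neq ebc; have cd := adjacent_neq ecd.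
have ad : a != d by rewrite eq_sym; apply: adjacent_neq.
by rewrite /is_graph_cycle /= !inE !negb_or ab ac ad bc bd cd /= eab ebc ecd eda.
Qed.

(* Every edge dominates the graph: each vertex off an edge is adjacent to
   one of its ends.  This fails for unicyclic graphs on >= 5 vertices,
   since it would force a second cycle. *)
Definition dominating_edges : Prop :=
  forall i j k, e i k -> j != i -> j != k -> e i j || e k j.

Section DominatingEdges.
Hypothesis e_dom : dominating_edges.

(* A triangle plus a fresh vertex d: d sees two triangle vertices, which
   span a second triangle through d. *)
Lemma dominating_triangle_free a b c : (3 < #|T|)%N ->
  e a b -> e b c -> e a c -> False.
Proof.
move=> big eab ebc eac.
have abc := triangle_cycle eab ebc eac.
have [d d_new] := fresh_vertex (s := [:: a; b; c]) big.
have second_triangle p q : e p q -> e p d -> e q d -> False.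
  move=> epq epd eqd; move/negP: d_new; apply.
  by apply: (unicyclic_cycle_sub e_uni abc (triangle_cycle epq eqd epd)); rewrite !inE eqxx !orbT.
have := d_new; rewrite !inE !negb_or => /and3P[da db dc].
have := e_dom eab da db; have := e_dom ebc db dc; have := e_dom eac da dc.
case E1: (e a d); case E2: (e b d); case E3: (e c d) => //= _ _ _.
all: solve [ exact: (second_triangle a b) | exact: (second_triangle a c)
           | exact: (second_triangle b c) ].
Qed.

(* A square plus a fresh vertex f: f sees two opposite corners, which span
   a second square through f. *)
Lemma dominating_square_free a b c d : (4 < #|T|)%N -> a != c -> b != d ->
  e a b -> e b c -> e c d -> e d a -> False.
Proof.
move=> big ac bd eab ebc ecd eda.
have abcd := square_cycle ac bd eab ebc ecd eda.
have [f f_new] := fresh_vertex (s := [:: a; b; c; d]) big.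
have not_on_cycle s : is_graph_cycle e s -> f \in s -> False.
  by move=> cyc fs; move: f_new; rewrite (unicyclic_cycle_sub e_uni abcd cyc fs).
have no_triangle p q : e p q -> e p f -> e q f -> False.
  by move=> epq epf eqf; apply: (dominating_triangle_free (ltnW big) epq eqf epf).
have := f_new; rewrite !inE !negb_or => /and4P[fa fb fc fd].
have ead : e a d by rewrite e_sym.
have := e_dom eab fa fb; have := e_dom ebc fb fc.
have := e_dom ecd fc fd; have := e_dom ead fa fd.
case Ea: (e a f); case Eb: (e b f); case Ec: (e c f); case Ed: (e d f) => //= _ _ _ _.
all: try by [ apply: (no_triangle a b) | apply: (no_triangle b c)
            | apply: (no_triangle c d) | apply: (no_triangle a d) ].
- apply: (not_on_cycle [:: a; b; c; f]); last by rewrite !inE eqxx !orbT.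
  by apply: square_cycle; rewrite // ?(eq_sym b) // e_sym.
- apply: (not_on_cycle [:: b; c; d; f]); last by rewrite !inE eqxx !orbT.
  by apply: square_cycle; rewrite // ?(eq_sym c) // e_sym.
Qed.

End DominatingEdges.

Lemma unicyclic_edge_nonneighbour : (4 < #|T|)%N ->
  exists i j k, [/\ e i k, ~~ e i j, ~~ e k j, j != i & j != k].
Proof.
move=> big.
case: (boolP [exists i, exists j, exists k,
   [&& e i k, ~~ e i j, ~~ e k j, j != i & j != k]]).
  by case/existsP=> i /existsP[j /existsP[k /and5P[*]]]; exists i, j, k.
rewrite negb_exists => /forallP no_witness; exfalso.
have dom : dominating_edges.
  move=> i j k eik ji jk; apply: contraTT (no_witness i); rewrite negb_or => nij.
  by rewrite negbK; apply/existsP; exists j; apply/existsP; exists k; rewrite eik ji jk /= andbT.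
have [_ [C [[s [cyc_s _]] _]]] := e_uni.
move: cyc_s; case: s => [|c0 [|c1 [|c2 [|c3 s]]]]; try by case/and3P.
  case/and3P=> _ _ /and4P[e01 e12 e20 _].
  by apply: (dominating_triangle_free dom (ltnW big) e01 e12); rewrite e_sym.
rewrite /is_graph_cycle /= !inE !negb_or.
case/and5P=> [/and5P[/and4P[_ c02 _ _] /and3P[_ c13 _] _ _ _] e01 e12 e23 _].
have ne02 : ~~ e c0 c2.
  by apply/negP => e02; apply: (dominating_triangle_free dom (ltnW big) e01 e12 e02).
have ne13 : ~~ e c1 c3.
  by apply/negP => e13; apply: (dominating_triangle_free dom (ltnW big) e12 e23 e13).
have e30 : e c3 c0.
  rewrite e_sym; move: (dom c0 c3 c1 e01); rewrite (negbTE ne13) orbF; apply.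
    by rewrite eq_sym; apply: contraNneq ne13 => <-; rewrite e_sym.
  by rewrite eq_sym.
exact: (dominating_square_free dom big c02 c13 e01 e12 e23 e30).
Qed.

End UnicyclicGraphs.

(* Rayleigh-quotient bound: for a real symmetric matrix with least
   eigenvalue lam, lam * y^T y <= y^T A y.  We pass to R[i], where the
   spectral theorem diagonalises A by a unitary matrix. *)
Section RayleighBound.
Variables (R : rcfType) (n : nat) (A : 'M[R]_n) (lam : R).
Hypotheses (A_sym : A^T = A) (lam_min : forall mu, eigenvalue A mu -> lam <= mu).

Let Ac : 'M[R[i]]_n := map_mx (real_complex R) A.

Lemma complexified_hermitian : Ac \is hermsymmx.
Proof.
have Ac_real : Ac \is a mxOver Num.real.
  by apply/mxOverP => i j; rewrite mxE /= complex_real.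
apply: realsym_hermsym Ac_real; apply/is_hermitianmxP; rewrite expr0 scale1r.
by apply/matrixP => i j; rewrite !mxE /=; congr (_%:C)%C; rewrite -[in RHS]A_sym mxE.
Qed.

(* A real eigenvalue of Ac is a root of the characteristic polynomial of A,
   hence an eigenvalue of A, hence at least lam. *)
Lemma complexified_eigenvalue_ge z :
  z \is Num.real -> eigenvalue Ac z -> lam%:C%C <= z.
Proof.
move=> z_real; rewrite -(RRe_real z_real) lecR eigenvalue_root_char => root_z.
apply: lam_min; rewrite eigenvalue_root_char -(fmorph_root (real_complex R)).
by rewrite map_char_poly.
Qed.

Lemma rayleigh_lower_bound (y : 'cV[R]_n) :
  lam * (y^T *m y) 0 0 <= (y^T *m A *m y) 0 0.
Proof.
have /orthomx_spectralP := hermitian_normalmx complexified_hermitian.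
set P := spectralmx Ac; set d := spectral_diag Ac => Ac_diag.
have P_unitary : P \is unitarymx := spectral_unitarymx Ac.
rewrite (invmx_unitary P_unitary) in Ac_diag.
have PPt : P *m map_mx conjC (P^T) = 1%:M by apply/unitarymxP.
have PtP : map_mx conjC (P^T) *m P = 1%:M by apply: mulmx1C.
(* the diagonal entries are eigenvalues of Ac, with eigenvectors e_i P *)
have d_ge i : lam%:C%C <= d 0 i.
  apply: complexified_eigenvalue_ge.
    exact: mxOverP (hermitian_spectral_diag_real complexified_hermitian) 0 i.
  apply/eigenvalueP; exists ('e_i *m P).
    rewrite Ac_diag !mulmxA -(mulmxA _ P) PPt mulmx1 -[_ *m diag_mx d]rowE row_diag_mx.
    by rewrite scalemxAl.
  apply/eqP => eiP0.
  move: (congr1 (mulmx^~ (map_mx conjC (P^T))) eiP0) => /=.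
  rewrite mul0mx -mulmxA PPt mulmx1 => /matrixP /(_ 0 i); rewrite !mxE !eqxx /=.
  by move/eqP; rewrite oner_eq0.
pose yc := map_mx (real_complex R) y.
have yc_real : map_mx conjC yc = yc.
  by apply: realmxC; apply/mxOverP => i j; rewrite mxE /= complex_real.
pose z := P *m yc.
have yc_P : yc^T *m map_mx conjC (P^T) = map_mx conjC (z^T).
  by rewrite /z trmx_mul map_mxM -[map_mx conjC yc^T]map_trmx yc_real.
have quadA : ((y^T *m A *m y) 0 0)%:C%C = (map_mx conjC (z^T) *m diag_mx d *m z) 0 0.
  have -> : map_mx conjC (z^T) *m diag_mx d *m z = yc^T *m Ac *m yc.
    by rewrite Ac_diag -yc_P /z !mulmxA.
  by rewrite /yc /Ac map_trmx -!map_mxM [RHS]mxE.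
have quadI : ((y^T *m y) 0 0)%:C%C = (map_mx conjC (z^T) *m z) 0 0.
  have -> : map_mx conjC (z^T) *m z = yc^T *m yc.
    by rewrite -yc_P /z -mulmxA (mulmxA _ P) PtP mul1mx.
  by rewrite /yc map_trmx -map_mxM [RHS]mxE.
rewrite -lecR rmorphM /= quadA quadI !mxE mulr_sumr; apply: ler_sum => j _.
rewrite mul_mx_diag !mxE [conjC _ * d 0 j]mulrC -mulrA [conjC _ * _]mulrC.
by apply: ler_wpM2r; [apply: mul_conjC_ge0 | apply: d_ge].
Qed.

End RayleighBound.

Lemma compl_graph_sym (T : finType) (e : rel T) :
  symmetric e -> symmetric (compl_graph e).
Proof. by move=> e_sym x y; rewrite /compl_graph /= eq_sym e_sym. Qed.

Lemma adj_mx_sym (R : pzRingType) n (e : rel 'I_n) :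
  symmetric e -> (adj_mx R e)^T = adj_mx R e.
Proof. by move=> e_sym; apply/matrixP => i j; rewrite !mxE e_sym. Qed.

Lemma sum_support3 (V : nmodType) (I : finType) (f : I -> V) a b c :
  a != b -> a != c -> b != c ->
  (forall q, q != a -> q != b -> q != c -> f q = 0) ->
  \sum_q f q = f a + f b + f c.
Proof.
move=> ab ac bc f_supp.
rewrite (bigD1 a) //= (bigD1 b) /=; last by rewrite eq_sym ab.
rewrite (bigD1 c) /=; last by rewrite eq_sym ac eq_sym bc.
rewrite big1 ?addr0 ?addrA // => q /andP[/andP[qa qb] qc].
exact: f_supp.
Qed.

Lemma quad_form_support3 (R : comPzRingType) n (M : 'M[R]_n) (y : 'cV[R]_n) i j k :
  i != j -> i != k -> j != k ->
  (forall q, q != i -> q != j -> q != k -> y q 0 = 0) ->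
  (y^T *m M *m y) 0 0
    = \sum_(q <- [:: i; j; k]) \sum_(p <- [:: i; j; k]) y p 0 * M p q * y q 0.
Proof.
move=> ij ik jk y_supp.
have restrict (F : 'I_n -> R) : (forall q, y q 0 = 0 -> F q = 0) ->
    \sum_q F q = \sum_(q <- [:: i; j; k]) F q.
  move=> F0; rewrite (sum_support3 ij ik jk) => [|q qi qj qk]; last by rewrite F0 ?y_supp.
  by rewrite !big_cons big_nil addr0 addrA.
rewrite mxE restrict => [|q yq0]; last by rewrite yq0 mulr0.
apply: eq_bigr => q _; rewrite mxE restrict => [|p yp0]; last by rewrite !mxE yp0 !mul0r.
by rewrite mulr_suml; apply: eq_bigr => p _; rewrite mxE.
Qed.

(* An eigenvector of an entrywise nonnegative matrix for a negative
   eigenvalue has a positive entry: were all entries <= 0, a negative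
   entry Y_p would give 0 >= (M Y)_p = lam Y_p > 0. *)
Lemma nonneg_mx_eigenvector_pos (R : realDomainType) n (M : 'M[R]_n) lam (Y : 'cV[R]_n) :
  (forall i j, 0 <= M i j) -> lam < 0 -> Y != 0 -> M *m Y = lam *: Y ->
  exists v, 0 < Y v 0.
Proof.
move=> M_ge0 lam_lt0 Y_neq0 Y_eigen.
have [v v_pos|no_pos] := pickP (fun v => 0 < Y v 0); first by exists v.
case/eqP: Y_neq0; apply/matrixP => p j; rewrite ord1 mxE.
have Yp_le0 : Y p 0 <= 0 by rewrite leNgt no_pos.
have : (M *m Y) p 0 <= 0.
  by rewrite mxE; apply: sumr_le0 => q _; rewrite mulr_ge0_le0 // leNgt no_pos.
by rewrite Y_eigen mxE => ?; apply/eqP; rewrite eq_le Yp_le0 /=; nra.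
Qed.

Section SinglePositiveEntry.
Variables (R : realFieldType) (n : nat) (e : rel 'I_n) (lam : R) (Y : 'cV[R]_n).
Hypotheses (e_irr : irreflexive e) (e_sym : symmetric e) (e_uni : unicyclic e).
Hypotheses (lam_lt : lam < -1) (Y_eigen : adj_mx R (compl_graph e) *m Y = lam *: Y).
Local Notation y q := (Y q ord0).

Lemma row_eigen u : \sum_q (compl_graph e u q)%:R * y q = lam * y u.
Proof.
move/matrixP: Y_eigen => /(_ u ord0); rewrite !mxE => <-.
by apply: eq_bigr => q _; rewrite mxE.
Qed.

Lemma row_eigen_off u : (forall q, e u q -> y q = 0) ->
  \sum_(q | q != u) y q = lam * y u.
Proof.
move=> nbr0; rewrite -row_eigen [RHS](bigD1 u) //= /compl_graph /= eqxx mul0r add0r.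
apply: eq_bigr => q qu; have [euq|_] := boolP (e u q).
  by rewrite nbr0 // mulr0.
by rewrite eq_sym qu mul1r.
Qed.

Variable v : 'I_n.
Hypothesis v_unique_pos : forall q, (0 < y q) = (q == v).

Lemma pos_at_v : 0 < y v.
Proof. by rewrite v_unique_pos. Qed.

Lemma nonpos_off_v q : q != v -> y q <= 0.
Proof. by move=> qv; rewrite leNgt v_unique_pos (negbTE qv). Qed.

(* Row u, for a U-neighbour u of v, sums only nonpositive entries; as
   lam < 0 this forces y u = 0 and then every summand to vanish. *)
Lemma neighbour_of_v_zero u :
  e u v -> y u = 0 /\ (forall q, compl_graph e u q -> y q = 0).
Proof.
move=> euv; have uv : u != v by apply: contraTneq euv => ->; rewrite e_irr.
have term_ge0 q : 0 <= - ((compl_graph e u q)%:R * y q).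
  rewrite oppr_ge0; have [->|qv] := eqVneq q v; first by rewrite /compl_graph /= euv andbF mul0r.
  by rewrite mulr_ge0_le0 ?ler0n ?nonpos_off_v.
have row_le0 : lam * y u <= 0.
  by rewrite -row_eigen -oppr_ge0 -sumrN; apply: sumr_ge0 => q _.
have yu0 : y u = 0.
  by apply/eqP; rewrite eq_le nonpos_off_v //=; move: lam_lt row_le0; move: (y u) => a; nra.
split=> // q compl_uq.
have sum0 : \sum_q - ((compl_graph e u q)%:R * y q) = 0.
  by rewrite sumrN row_eigen yu0 mulr0 oppr0.
have := psumr_eq0P (fun q _ => term_ge0 q) sum0 (i := q) isT.
by rewrite compl_uq mul1r => /eqP; rewrite oppr_eq0 => /eqP.
Qed.

Lemma sum_off_v : \sum_(q | q != v) y q = lam * y v.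
Proof. by apply: row_eigen_off => q; rewrite e_sym => /neighbour_of_v_zero[]. Qed.

Lemma negative_neq_v w : y w < 0 -> w != v.
Proof. by apply: contraTneq => ->; rewrite -leNgt ltW ?pos_at_v. Qed.

Lemma negative_not_neighbour w : y w < 0 -> ~~ e w v.
Proof.
by move=> wneg; apply/negP => /neighbour_of_v_zero[w0 _]; rewrite w0 ltxx in wneg.
Qed.

Lemma negative_neighbour_of u0 w : e u0 v -> y w < 0 -> e u0 w.
Proof.
move=> eu0v wneg; have [yu0 nbr0] := neighbour_of_v_zero eu0v.
have [u0w|u0w] := eqVneq u0 w; first by rewrite -u0w yu0 ltxx in wneg.
apply: contraTT wneg => neu0w.
by rewrite (nbr0 w) ?ltxx // /compl_graph /= u0w.
Qed.

(* Were u negative without negative U-neighbours, rows u and v would read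
   S - y u = lam y u and S - y v = lam y v for the total S, whence
   (1 + lam) (y v - y u) = 0: impossible. *)
Lemma negative_has_negative_neighbour u : y u < 0 -> exists2 u', y u' < 0 & e u u'.
Proof.
move=> uneg; have [u' /andP[u'neg euu']|no_nbr] := pickP (fun u' => (y u' < 0) && e u u').
  by exists u'.
exfalso; have row_u : \sum_(q | q != u) y q = lam * y u.
  apply: row_eigen_off => q euq; apply/eqP; rewrite eq_le.
  have qv : q != v by apply: contraNneq (negative_not_neighbour uneg) => <-.
  by rewrite nonpos_off_v //= leNgt; move: (no_nbr q); rewrite euq andbT => ->.
have split_at w : \sum_q y q = y w + \sum_(q | q != w) y q by rewrite (bigD1 w).
have := split_at u; have := split_at v; rewrite row_u sum_off_v.
by move: lam_lt pos_at_v uneg; move: (y u) (y v) (\sum_q y q) => a b S; nra.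
Qed.

(* Row v: the entries off v sum to lam y v < 0, so one of them is negative. *)
Lemma exists_negative : exists w, y w < 0.
Proof.
have [w wneg|no_neg] := pickP (fun w => y w < 0); first by exists w.
exfalso; have : \sum_(q | q != v) y q = 0.
  by apply: big1 => q qv; apply/eqP; rewrite eq_le nonpos_off_v //= leNgt no_neg.
by rewrite sum_off_v; move: lam_lt pos_at_v; move: (y v) => a; nra.
Qed.

Lemma negative_triangle : (1 < n)%N ->
  exists u0 w1 w2, [/\ e u0 v, e w1 w2, y w1 < 0 /\ y w2 < 0,
    forall s, is_graph_cycle e s -> {subset s <= [:: u0; w1; w2]}
  & forall q, y q < 0 -> (q == w1) || (q == w2)].
Proof.
move=> big.
have [u0 evu0] : exists u0, e v u0.
  by apply: connected_has_neighbour (proj1 e_uni) _; rewrite card_ord.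
have eu0v : e u0 v by rewrite e_sym.
have [w1 w1neg] := exists_negative.
have [w2 w2neg e12] := negative_has_negative_neighbour w1neg.
have triangle w w' : y w < 0 -> y w' < 0 -> e w w' -> is_graph_cycle e [:: u0; w; w'].
  move=> wneg w'neg eww'.
  by apply: triangle_cycle => //; apply: negative_neighbour_of.
have cycle_sub s : is_graph_cycle e s -> {subset s <= [:: u0; w1; w2]}.
  by move=> cyc; apply: unicyclic_cycle_sub e_uni (triangle _ _ w1neg w2neg e12) cyc.
exists u0, w1, w2; split=> // q qneg.
have [q' q'neg eqq'] := negative_has_negative_neighbour qneg.
have := cycle_sub _ (triangle _ _ qneg q'neg eqq') q; rewrite !inE eqxx orbT => /(_ isT).
by rewrite eq_sym (negbTE (adjacent_neq e_irr (negative_neighbour_of eu0v qneg))).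
Qed.

(* With Y supported on {v, w1, w2}, rows w1, w2 and v give
   y v = lam y w1 = lam y w2 and y w1 + y w2 = lam y v.  A fifth vertex z
   outside {v, u0, w1, w2} misses w1 or w2 in U (else z w1 w2 would be a
   second triangle), so its row adds y v + y w1 = 0, y v + y w2 = 0 or
   y v + y w1 + y w2 = 0; each forces lam = -1. *)
Lemma single_positive_entry_absurd : (4 < n)%N -> False.
Proof.
move=> big.
have [u0 [w1 [w2 [eu0v e12 [w1neg w2neg] cycle_sub neg_w12]]]] :=
  negative_triangle (ltnW (ltnW (ltnW big))).
have w1v := negative_neq_v w1neg; have nw1v := negative_not_neighbour w1neg.
have w2v := negative_neq_v w2neg; have nw2v := negative_not_neighbour w2neg.
have w12 := adjacent_neq e_irr e12.
have supp q : q != v -> q != w1 -> q != w2 -> y q = 0.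
  move=> qv qw1 qw2; apply/eqP; rewrite eq_le nonpos_off_v //= leNgt.
  by apply/negP => /neg_w12; rewrite (negbTE qw1) (negbTE qw2).
have row3 p : (compl_graph e p v)%:R * y v + (compl_graph e p w1)%:R * y w1
                + (compl_graph e p w2)%:R * y w2 = lam * y p.
  rewrite -row_eigen (sum_support3 (a := v) _ _ w12) ?(eq_sym v) //.
  by move=> q qv qw1 qw2; rewrite supp // mulr0.
have E1 := row3 w1; have E2 := row3 w2; have Ev := row3 v.
rewrite /compl_graph /= !eqxx w1v w2v (eq_sym v) w1v (eq_sym v) w2v in E1 E2 Ev.
rewrite (e_sym v) (negbTE nw1v) (e_sym v) (negbTE nw2v) in Ev.
rewrite (negbTE nw1v) e12 (negbTE nw2v) (e_sym w2) e12 (eq_sym w2) w12 in E1 E2.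
have [z z_new] : exists z, z \notin [:: v; u0; w1; w2].
  by apply: fresh_vertex; rewrite card_ord.
move: z_new; rewrite !inE !negb_or => /and4P[zv zu0 zw1 zw2].
have not_both : ~~ (e z w1 && e z w2).
  apply/andP => -[ezw1 ezw2].
  have := cycle_sub _ (triangle_cycle e_irr e_sym ezw1 e12 ezw2) z.
  by rewrite !inE eqxx (negbTE zu0) (negbTE zw1) (negbTE zw2) => /(_ isT).
have [ezv|nezv] := boolP (e z v).
  have [_ compl_z0] := neighbour_of_v_zero ezv.
  move: not_both; rewrite negb_and => /orP[nezw|nezw].
    by move: w1neg; rewrite compl_z0 ?ltxx // /compl_graph /= zw1.
  by move: w2neg; rewrite compl_z0 ?ltxx // /compl_graph /= zw2.
have Ez := row3 z; rewrite (supp z) // mulr0 /compl_graph /= zv zw1 zw2 nezv in Ez.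
move: not_both E1 E2 Ev Ez lam_lt pos_at_v w1neg w2neg.
case: (e z w1); case: (e z w2) => //= _;
  move: (y v) (y w1) (y w2) => a x1 x2; rewrite ?mulr1n ?mulr0n; nra.
Qed.

End SinglePositiveEntry.

Lemma two_positive_entries (R : realFieldType) n (e : rel 'I_n) (lam : R) (Y : 'cV[R]_n) :
  (4 < n)%N -> simple_graph e -> unicyclic e -> lam < -1 -> Y != 0 ->
  adj_mx R (compl_graph e) *m Y = lam *: Y ->
  (2 <= #|[set i | (0 < Y i ord0)%R]|)%N.
Proof.
move=> big [e_irr e_sym] e_uni lam_lt Y_neq0 Y_eigen.
rewrite leqNgt ltnS leq_eqVlt ltnS leqn0 cards_eq0; apply/negP => /orP[one_pos|/eqP no_pos].
  have [v pos_v] := cards1P one_pos.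
  apply: (single_positive_entry_absurd e_irr e_sym e_uni lam_lt Y_eigen (v := v) _ big) => q.
  by move/setP: pos_v => /(_ q); rewrite !inE.
have [v v_pos] : exists v, 0 < Y v 0.
  apply: (nonneg_mx_eigenvector_pos _ _ Y_neq0 Y_eigen) => [i j|]; first by rewrite mxE ler0n.
  by apply: lt_trans lam_lt _; rewrite ltrN10.
by move/setP: no_pos => /(_ v); rewrite !inE v_pos.
Qed.

(* lam_min(U^c) < -1: test the Rayleigh quotient on the induced path
   i - j - k of U^c with y = e_i - 2 e_j + e_k, where y^T A y = -8 and
   y^T y = 6. *)
Lemma compl_least_eigenvalue_lt (R : rcfType) n (e : rel 'I_n) (lam : R) :
  (4 < n)%N -> simple_graph e -> unicyclic e ->
  least_eigenvalue (adj_mx R (compl_graph e)) lam -> lam < -1.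
Proof.
move=> big [e_irr e_sym] e_uni [_ lam_min].
have [i [j [k [eik nij nkj ji jk]]]] :
    exists i j k, [/\ e i k, ~~ e i j, ~~ e k j, j != i & j != k].
  by apply: unicyclic_edge_nonneighbour; rewrite ?card_ord.
have ik := adjacent_neq e_irr eik; have ij : i != j by rewrite eq_sym.
pose y : 'cV[R]_n := \col_p ((p == i)%:R - 2%:R * (p == j)%:R + (p == k)%:R).
have y_supp q : q != i -> q != j -> q != k -> y q 0 = 0.
  by move=> qi qj qk; rewrite mxE (negbTE qi) (negbTE qj) (negbTE qk) /=; ring.
have := rayleigh_lower_bound (adj_mx_sym R (compl_graph_sym e_sym)) lam_min y.
rewrite -{1}(mulmx1 y^T) !(quad_form_support3 _ ij ik jk y_supp).
rewrite !big_cons !big_nil !mxE /compl_graph /= !eqxx (negbTE ij) (negbTE ik) (negbTE jk).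
rewrite !(eq_sym j) !(eq_sym k) (negbTE ij) (negbTE ik) (negbTE jk).
rewrite (e_sym k i) (e_sym j i) (e_sym j k) eik (negbTE nij) (negbTE nkj) /=.
by move=> ?; lra.
Qed.

Theorem lemma3p3 (R : rcfType) (n : nat) (e : rel 'I_n) (lam : R) (X : 'cV[R]_n) :
  (5 <= n)%N ->
  simple_graph e ->
  unicyclic e ->
  least_eigenvalue (adj_mx R (compl_graph e)) lam ->
  X != 0 ->
  adj_mx R (compl_graph e) *m X = lam *: X ->
  (2 <= #|[set i : 'I_n | (0 < X i ord0)%R]|)%N /\ (2 <= #|[set i : 'I_n | (X i ord0 < 0)%R]|)%N.
Proof.
move=> big simple uni least X_neq0 X_eigen.
have lam_lt := compl_least_eigenvalue_lt big simple uni least.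
split; first exact: two_positive_entries X_eigen.
(* the negative entries of X are the positive entries of the eigenvector -X *)
have -> : [set i | X i ord0 < 0] = [set i | 0 < (- X) i ord0].
  by apply/setP => i; rewrite !inE mxE oppr_gt0.
apply: two_positive_entries big simple uni lam_lt _ _; first by rewrite oppr_eq0.
by rewrite mulmxN X_eigen scalerN.
Qed.
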